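(* Let $I$ be the ideal of $\mathrm{WCQSym}$ generated by $B_\varepsilon=\{M_\gamma:\gamma\in\mathcal C_\varepsilon\}$. For every $\tilde{\mathbb N}$-composition $\alpha\in\mathcal C_N$, $$M_\alpha+(-1)^{\ell_\varepsilon(\alpha)+1}M_{\bar\alpha}\in I.$$
   Context: $\tilde{\mathbb N}=\mathbb N\cup\{\varepsilon\}$ with $0+\varepsilon=\varepsilon+\varepsilon=\varepsilon$ and $n+\varepsilon=n$ for integers $n\ge1$. $\mathbf{k}$ is a commutative ring containing $\mathbb Q$; $\mathbf{k}[[X]]_{\tilde{\mathbb N}}$, $X=\{x_1<x_2<\cdots\}$, is the algebra of possibly infinite linear combinations of formal monomials $\prod x_i^{f(x_i)}$ with $f$ finitely supported $\tilde{\mathbb N}$-valued, multiplied by adding exponents in $\tilde{\mathbb N}$. An $\tilde{\mathbb N}$-composition is a finite (possibly empty) sequence of elements of $\{\varepsilon,1,2,\dots\}$; $M_{(\gamma_1,\dots,\gamma_k)}=\sum_{1\le i_1<\cdots<i_k}x_{i_1}^{\gamma_1}\cdots x_{i_k}^{\gamma_k}$, $M_\emptyset=1$, and $\mathrm{WCQSym}$ is their $\mathbf k$-span, a subalgebra of $\mathbf{k}[[X]]_{\tilde{\mathbb N}}$. $\ell_\varepsilon(\alpha)$ is the number of entries of $\alpha$ equal to $\varepsilon$ and $\bar\alpha$ is $\alpha$ with its $\varepsilon$ entries deleted. $\mathcal C_\varepsilon$ is the set of $\tilde{\mathbb N}$-compositions with first entry $\varepsilon$, and $\mathcal C_N$ the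 set of all others (the empty composition and those whose first entry is a positive integer). *)

From mathcomp Require Import all_boot all_order all_algebra.
Set Implicit Arguments. Unset Strict Implicit. Unset Printing Implicit Defensive.
Import GRing.Theory.
Local Open Scope ring_scope.

(* Elements of Ñ = N ∪ {ε}:  None = ε,  Some n = n. *)
Definition wn := option nat.
Definition eps : wn := None.

Definition wadd (a b : wn) : wn :=
  match a, b with
  | Some x, Some y => Some (x + y)%N
  | None, None => None
  | Some 0, None | None, Some 0 => None
  | Some x, None => Some x
  | None, Some y => Some y
  end.

(* An exponent vector (f(x_1), f(x_2), ...) is represented by a finite
   sequence; positions beyond its length carry exponent 0. *)
Definition mono := seq wn.

(* Candidate summands of e : every a with a + b = e for some b is in here. *)
Definition wcands (e : wn) : seq wn :=
  None :: [seq Some i | i <- iota 0 (odflt 0%N e).+1].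

Definition wdecomp (e : wn) : seq (wn * wn) :=
  [seq p <- [seq (a, b) | a <- wcands e, b <- wcands e] | wadd p.1 p.2 == e].

Fixpoint mdecomp (m : mono) : seq (mono * mono) :=
  if m is e :: m' then
    [seq (p.1 :: q.1, p.2 :: q.2) | p <- wdecomp e, q <- mdecomp m']
  else [:: ([::], [::])].

(* Elements of k[[X]]_Ñ: coefficient functions on monomials. *)
Definition series (R : comUnitRingType) := mono -> R.

Definition smul (R : comUnitRingType) (F G : series R) : series R :=
  fun m => \sum_(p <- mdecomp m) F p.1 * G p.2.

Definition is_comp (g : seq wn) : bool := all (fun e => e != Some 0%N) g.

Definition Mq (R : comUnitRingType) (g : seq wn) : series R :=
  fun m => if [seq e <- m | e != Some 0%N] == g then 1 else 0.

Definition in_Ceps (g : seq wn) : bool := if g is None :: _ then true else false.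

Definition leps (a : seq wn) : nat := count (fun e => e == None) a.
Definition bar (a : seq wn) : seq wn := [seq e <- a | e != None].

Definition in_WCQSym (R : comUnitRingType) (F : series R) : Prop :=
  exists (n : nat) (c : 'I_n -> R) (g : 'I_n -> seq wn),
    (forall i, is_comp (g i)) /\
    forall m, F m = \sum_(i < n) c i * Mq R (g i) m.

Definition in_I (R : comUnitRingType) (F : series R) : Prop :=
  exists (n : nat) (a : 'I_n -> series R) (g : 'I_n -> seq wn),
    (forall i, in_WCQSym (a i) /\ is_comp (g i) /\ in_Ceps (g i)) /\
    forall m, F m = \sum_(i < n) smul (a i) (Mq R (g i)) m.

From mathcomp Require Import all_boot all_order all_algebra.
Set Implicit Arguments. Unset Strict Implicit. Unset Printing Implicit Defensive.
Import GRing.Theory.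
Local Open Scope ring_scope.

(* M_u M_v is the sum of the M_w over the quasi-shuffles w of u and v
   (merged entries being added in Ñ), counted with multiplicity; write ΣS for
   the sum of the M_w over a multiset S of words.  Let Φ(b) consist of the
   quasi-shuffles of b with ε d together with those of b with d.  As c + ε = c
   for c >= 1, Φ(c b) = c Φ(b) + ε W + W with W the quasi-shuffles of c b
   with d; hence, if Σ{p ε w, p w} ∈ I for all w, then Σ pΦ(c b) ∈ I implies
   Σ p c Φ(b) ∈ I.  For q = b q', the generator M_q M_{ε d} is Σ bΦ(q') plus a
   sum over words starting with ε, which lies in I; peeling off q' one entry
   at a time ends at qΦ() = {q ε d, q d}.  So, by strong induction on the
   length of q, M_{q ε d} + M_{q d} ∈ I for every nonempty q, and removing the
   first ε of α with this relation proves the theorem by induction on ℓ_ε(α). *)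

Section IdealClosure.
Variable R : comUnitRingType.
Implicit Types F G : series R.

Lemma in_I_eq F G : F =1 G -> in_I F -> in_I G.
Proof. by move=> FG [n [a [g [gen EF]]]]; exists n, a, g; split=> // m; rewrite -FG. Qed.

Lemma in_I0 : in_I (fun=> 0 : R).
Proof.
exists 0%N, (fun _ _ => 0), (fun=> [::]); split; first by case.
by move=> m; rewrite big_ord0.
Qed.

Lemma in_ID F G : in_I F -> in_I G -> in_I (fun m => F m + G m).
Proof.
move=> [n1 [a1 [g1 [gen1 E1]]]] [n2 [a2 [g2 [gen2 E2]]]].
pose pick T (f1 : 'I_n1 -> T) (f2 : 'I_n2 -> T) i :=
  match split i with inl j => f1 j | inr j => f2 j end.
exists (n1 + n2)%N, (pick _ a1 a2), (pick _ g1 g2); split.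
  by move=> i; rewrite /pick; case: (split i).
move=> m; rewrite big_split_ord E1 E2 /pick.
congr (_ + _); apply: eq_bigr => i _.
  by rewrite -[lshift _ _]/(unsplit (inl i)) unsplitK.
by rewrite -[rshift _ _]/(unsplit (inr i)) unsplitK.
Qed.

Lemma in_WCQSymZ c F : in_WCQSym F -> in_WCQSym (fun m => c * F m).
Proof.
move=> [n [a [g [comp EF]]]]; exists n, (fun i => c * a i), g; split=> // m.
by rewrite EF mulr_sumr; apply: eq_bigr => i _; rewrite mulrA.
Qed.

Lemma in_IZ c F : in_I F -> in_I (fun m => c * F m).
Proof.
move=> [n [a [g [gen EF]]]]; exists n, (fun i m => c * a i m), g; split.
  by move=> i; case: (gen i) => aW gi; split=> //; apply: in_WCQSymZ.
move=> m; rewrite EF mulr_sumr; apply: eq_bigr => i _.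
by rewrite /smul mulr_sumr; apply: eq_bigr => p _; rewrite mulrA.
Qed.

Lemma in_IB F G : in_I F -> in_I G -> in_I (fun m => F m - G m).
Proof.
move=> IF IG; apply: in_I_eq (in_ID IF (in_IZ (-1) IG)) => m.
by rewrite mulN1r.
Qed.

Lemma in_WCQSym_Mq g : is_comp g -> in_WCQSym (Mq R g).
Proof.
by move=> gc; exists 1%N, (fun=> 1), (fun=> g); split=> // m; rewrite big_ord1 mul1r.
Qed.

Lemma in_I_generator A g :
  in_WCQSym A -> is_comp g -> in_Ceps g -> in_I (smul A (Mq R g)).
Proof.
by move=> AW gc ge; exists 1%N, (fun=> A), (fun=> g); split=> // m; rewrite big_ord1.
Qed.

End IdealClosure.

Lemma waddC : commutative wadd.
Proof. by case=> [[|x]|] [[|y]|] //=; rewrite addnC. Qed.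

Lemma wadd0n : left_id (Some 0%N) wadd.
Proof. by case=> [[|y]|]. Qed.

Lemma waddn0 : right_id (Some 0%N) wadd.
Proof. by move=> x; rewrite waddC wadd0n. Qed.

Lemma wadd_eps x : x != Some 0%N -> wadd x eps = x.
Proof. by case: x => [[|x]|]. Qed.

Lemma wadd_neq0 x y : x != Some 0%N -> y != Some 0%N -> wadd x y != Some 0%N.
Proof. by case: x => [[|x]|]; case: y => [[|y]|]. Qed.

Lemma mem_wcands a b : a \in wcands (wadd a b).
Proof.
rewrite in_cons; case: a => [i|] //; rewrite (mem_map Some_inj) mem_iota ltnS.
by case: b => [j|] /=; case: i => [|i] //; case: j => [|j] //=; rewrite leq_addr.
Qed.

Lemma mem_wdecomp e p : (p \in wdecomp e) = (wadd p.1 p.2 == e).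
Proof.
rewrite mem_filter; apply/andP/idP => [[//]|/eqP <-]; split=> //.
case: p => a b; apply: (allpairs_f (fun x y => (x, y))); first exact: mem_wcands.
by rewrite waddC mem_wcands.
Qed.

Lemma uniq_wdecomp e : uniq (wdecomp e).
Proof.
have uniq_wcands : uniq (wcands e).
  rewrite /wcands cons_uniq (map_inj_uniq Some_inj) iota_uniq andbT.
  by apply/negP; case/mapP.
by apply/filter_uniq/allpairs_uniq => // -[? ?] [? ?].
Qed.

Lemma sum_wdecomp_eq (R : pzSemiRingType) e q :
  \sum_(p <- wdecomp e) (p == q)%:R = (wadd q.1 q.2 == e)%:R :> R.
Proof.
rewrite -mem_wdecomp -(count_uniq_mem _ (uniq_wdecomp e)) -sum1_count natr_sum.
by rewrite [RHS]big_mkcond; apply: eq_bigr => p _ /=; case: eqP.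
Qed.

Definition nzexp (m : mono) : seq wn := [seq e <- m | e != Some 0%N].

Definition head_splits (u : seq wn) : seq (wn * seq wn) :=
  (Some 0%N, u) :: (if u is x :: u' then [:: (x, u')] else [::]).

Lemma head_splits_comp u h : is_comp u -> h \in head_splits u -> is_comp h.2.
Proof.
case: u => [|x u] uc; rewrite !inE; first by move=> /eqP ->.
by case/orP=> /eqP -> //; case/andP: uc.
Qed.

Section MonomialProduct.
Variable R : comUnitRingType.
Implicit Types F G : series R.

Lemma MqE g m : Mq R g m = (nzexp m == g)%:R.
Proof. by rewrite /Mq; case: eqP. Qed.

Lemma Mq_cons u a x : is_comp u ->
  Mq R u (a :: x) = \sum_(h <- head_splits u) (a == h.1)%:R * Mq R h.2 x.
Proof.
case: u => [|y u] uc; rewrite big_cons ?big_nil ?big_seq1 !MqE /nzexp /=;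
  have [-> | a0] /= := eqVneq a (Some 0%N); rewrite ?mul1r ?mul0r ?addr0 ?add0r //.
  by case/andP: uc => /negbTE y0 _; rewrite [Some 0%N == y]eq_sym y0 mul0r addr0.
by rewrite -natrM mulnb (@eqseq_cons _ a).
Qed.

Lemma smul_ext F F' G G' m : F =1 F' -> G =1 G' -> smul F G m = smul F' G' m.
Proof. by move=> FF GG; apply: eq_bigr => p _; rewrite FF GG. Qed.

Lemma smul_nil F G : smul F G [::] = F [::] * G [::].
Proof. by rewrite /smul big_seq1. Qed.

Lemma smul_cons F G e m : smul F G (e :: m) =
  \sum_(p <- wdecomp e) smul (fun x => F (p.1 :: x)) (fun x => G (p.2 :: x)) m.
Proof. by rewrite /smul big_allpairs_dep. Qed.

Lemma smul_sum I J (s : seq I) (t : seq J) (c : I -> R) (d : J -> R)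
    (F_ : I -> series R) (G_ : J -> series R) m :
  smul (fun x => \sum_(i <- s) c i * F_ i x) (fun x => \sum_(j <- t) d j * G_ j x) m
  = \sum_(i <- s) \sum_(j <- t) c i * d j * smul (F_ i) (G_ j) m.
Proof.
rewrite /smul; under eq_bigr do rewrite mulr_suml; rewrite exchange_big.
apply: eq_bigr => i _; under eq_bigr do rewrite mulr_sumr; rewrite exchange_big.
apply: eq_bigr => j _; rewrite mulr_sumr; apply: eq_bigr => p _.
by rewrite mulrACA.
Qed.

Lemma smul_Mq_cons u v e m : is_comp u -> is_comp v ->
  smul (Mq R u) (Mq R v) (e :: m) =
  \sum_(h <- head_splits u) \sum_(k <- head_splits v)
     (wadd h.1 k.1 == e)%:R * smul (Mq R h.2) (Mq R k.2) m.
Proof.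
move=> uc vc; rewrite smul_cons.
under eq_bigr do
  rewrite (smul_ext m (fun x => Mq_cons _ x uc) (fun x => Mq_cons _ x vc)) smul_sum.
rewrite exchange_big; apply: eq_bigr => h _; rewrite exchange_big.
apply: eq_bigr => k _; rewrite -mulr_suml -(sum_wdecomp_eq _ e (h.1, k.1)).
by congr (_ * _); apply: eq_bigr => -[a b] _; rewrite -natrM mulnb.
Qed.

End MonomialProduct.

Fixpoint qshuffle (u v : seq wn) {struct u} : seq (seq wn) :=
  match u with
  | [::] => [:: v]
  | x :: u' => (fix qshuffle_u (v : seq wn) : seq (seq wn) :=
      match v with
      | [::] => [:: u]
      | y :: v' => map (cons x) (qshuffle u' v) ++ map (cons y) (qshuffle_u v')
                   ++ map (cons (wadd x y)) (qshuffle u' v')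
      end) v
  end.

Lemma qshuffle0s v : qshuffle [::] v = [:: v].
Proof. by []. Qed.

Lemma qshuffles0 u : qshuffle u [::] = [:: u].
Proof. by case: u. Qed.

Lemma qshuffle_cons x u y v : qshuffle (x :: u) (y :: v) =
  map (cons x) (qshuffle u (y :: v)) ++ map (cons y) (qshuffle (x :: u) v)
  ++ map (cons (wadd x y)) (qshuffle u v).
Proof. by []. Qed.

Arguments qshuffle : simpl never.
Arguments wadd : simpl never.

Lemma all_comp_qshuffle u v : is_comp u -> is_comp v -> all is_comp (qshuffle u v).
Proof.
elim: u v => [|x u IHu] v; first by rewrite qshuffle0s /= => _ ->.
move=> xuc; elim: v => [|y v IHv] yvc; first by rewrite qshuffles0 /= andbT.
move: (xuc) (yvc) => /andP[x0 uc] /andP[y0 vc].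
rewrite qshuffle_cons !all_cat !all_map; apply/and3P; split; apply/allP.
- by move=> w /(allP (IHu _ uc yvc)) /= ->; rewrite x0.
- by move=> w /(allP (IHv vc)) /= ->; rewrite y0.
- by move=> w /(allP (IHu _ uc vc)) /= ->; rewrite wadd_neq0.
Qed.

Lemma count_map_cons c e w (L : seq (seq wn)) :
  count_mem (e :: w) (map (cons c) L) = ((c == e) * count_mem w L)%N.
Proof.
elim: L => [|z L IH] /=; first by rewrite muln0.
by rewrite IH (@eqseq_cons _ c) mulnDr mulnb.
Qed.

Lemma count_qshuffle_nil u v :
  count_mem [::] (qshuffle u v) = (u == [::]) && (v == [::]).
Proof.
case: u => [|x u]; case: v => [|y v] //.
have count_nil_map c L : count_mem [::] (map (cons c) L) = 0%N by elim: L.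
by rewrite qshuffle_cons !count_cat !count_nil_map.
Qed.

Lemma nzexp_cons e m :
  nzexp (e :: m) = if e == Some 0%N then nzexp m else e :: nzexp m.
Proof. by rewrite /nzexp /=; case: eqP. Qed.

Lemma count_qshuffle_cons u v e m : is_comp u -> is_comp v ->
  count_mem (nzexp (e :: m)) (qshuffle u v) =
  (\sum_(h <- head_splits u) \sum_(k <- head_splits v)
     (wadd h.1 k.1 == e) * count_mem (nzexp m) (qshuffle h.2 k.2))%N.
Proof.
move=> uc vc; rewrite nzexp_cons /head_splits.
have [-> | e0] := eqVneq e (Some 0%N).
  case: u uc => [|x u] uc; case: v vc => [|y v] vc;
    rewrite !big_cons !big_nil /= ?wadd0n ?waddn0 mul1n ?addn0 //.
  - by case/andP: vc => /negbTE ->; rewrite addn0.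
  - by case/andP: uc => /negbTE ->; rewrite addn0.
  case/andP: uc => x0 _; case/andP: vc => y0 _.
  by rewrite (negbTE x0) (negbTE y0) (negbTE (wadd_neq0 x0 y0)) !addn0.
case: u {uc} => [|x u]; case: v {vc} => [|y v];
  rewrite !big_cons !big_nil /= ?wadd0n ?waddn0 [Some 0%N == e]eq_sym (negbTE e0) add0n
    ?addn0 //.
- by rewrite (@eqseq_cons _ y); do 2 case: eqP.
- by rewrite (@eqseq_cons _ x) (qshuffles0 u) /= addn0; do 2 case: eqP.
by rewrite (qshuffle_cons x u y v) !count_cat !count_map_cons addnCA.
Qed.

Section QuasiShuffleIdeal.
Variable R : comUnitRingType.

Definition Msum (L : seq (seq wn)) : series R := fun m => \sum_(w <- L) Mq R w m.

Lemma MsumE L m : Msum L m = (count_mem (nzexp m) L)%:R.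
Proof.
rewrite /Msum -sum1_count natr_sum [RHS]big_mkcond.
by apply: eq_bigr => w _; rewrite MqE eq_sym /=; case: eqP.
Qed.

Lemma smul_Mq u v : is_comp u -> is_comp v ->
  smul (Mq R u) (Mq R v) =1 Msum (qshuffle u v).
Proof.
move=> + + m; rewrite MsumE; elim: m u v => [|e m IHm] u v uc vc.
  by rewrite smul_nil !MqE count_qshuffle_nil -natrM mulnb !(eq_sym [::]).
rewrite smul_Mq_cons // count_qshuffle_cons // natr_sum.
apply: eq_big_seq => h hu; rewrite natr_sum; apply: eq_big_seq => k kv.
by rewrite natrM IHm // ?(head_splits_comp uc hu) ?(head_splits_comp vc kv).
Qed.

Lemma in_I_Msum_perm L L' : perm_eq L L' -> in_I (Msum L) -> in_I (Msum L').
Proof. by move=> LL'; apply: in_I_eq => m; apply: perm_big. Qed.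

Lemma in_I_Msum_cat L L' : in_I (Msum L) -> in_I (Msum L') -> in_I (Msum (L ++ L')).
Proof. by move=> IL IL'; apply: in_I_eq (in_ID IL IL') => m; rewrite /Msum big_cat. Qed.

Lemma in_I_Msum_catl L L' : in_I (Msum (L ++ L')) -> in_I (Msum L') -> in_I (Msum L).
Proof.
move=> IL IL'; apply: in_I_eq (in_IB IL IL') => m.
by rewrite /Msum big_cat addrK.
Qed.

Lemma in_I_Msum_Ceps L : all (fun w => is_comp w && in_Ceps w) L -> in_I (Msum L).
Proof.
elim: L => [_ | w L IHL /= /andP[/andP[wc we] LI]].
  by apply: in_I_eq (@in_I0 R) => m; rewrite /Msum big_nil.
apply: (in_I_Msum_cat (L := [:: w])) (IHL LI).
have nilc : is_comp [::] by [].
exact: in_I_eq (smul_Mq nilc wc) (in_I_generator (in_WCQSym_Mq R nilc) wc we).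
Qed.

Lemma in_I_Msum_qshuffle_eps u d : is_comp u -> is_comp d ->
  in_I (Msum (qshuffle u (eps :: d))).
Proof.
move=> uc dc; have edc : is_comp (eps :: d) by [].
exact: in_I_eq (smul_Mq uc edc) (in_I_generator (in_WCQSym_Mq R uc) edc erefl).
Qed.

End QuasiShuffleIdeal.

Definition eps_dup (W : seq (seq wn)) : seq (seq wn) := map (cons eps) W ++ W.

Definition eps_qshuffles (b d : seq wn) : seq (seq wn) :=
  qshuffle b (eps :: d) ++ qshuffle b d.

Lemma perm_eps_qshuffles_cons c b d : c != Some 0%N ->
  perm_eq (eps_qshuffles (c :: b) d)
          (map (cons c) (eps_qshuffles b d) ++ eps_dup (qshuffle (c :: b) d)).
Proof.
move=> c0; rewrite /eps_qshuffles /eps_dup (qshuffle_cons c b eps d) (wadd_eps c0).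
by rewrite map_cat -!catA perm_cat2l perm_catCA.
Qed.

Lemma perm_qshuffle_cons_eps b q d : b != Some 0%N ->
  perm_eq (qshuffle (b :: q) (eps :: d))
          (map (cons b) (eps_qshuffles q d) ++ map (cons eps) (qshuffle (b :: q) d)).
Proof.
move=> b0; rewrite /eps_qshuffles (qshuffle_cons b q eps d) (wadd_eps b0).
by rewrite map_cat -!catA perm_cat2l perm_catC.
Qed.

Definition eps_pair (q d : seq wn) : seq (seq wn) := [:: q ++ eps :: d; q ++ d].

Lemma map_cat_cons (p : seq wn) c (X : seq (seq wn)) :
  map (cat p) (map (cons c) X) = map (cat (rcons p c)) X.
Proof. by rewrite -map_comp; apply: eq_map => w /=; rewrite cat_rcons. Qed.

Section EpsPair.
Variables (R : comUnitRingType) (N : nat).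
Hypothesis IH : forall q d, (size q < N)%N -> q != [::] -> is_comp q -> is_comp d ->
  in_I (Msum R (eps_pair q d)).

Lemma in_I_Msum_prefix_eps_dup p W : p != [::] -> (size p < N)%N -> is_comp p ->
  all is_comp W -> in_I (Msum R (map (cat p) (eps_dup W))).
Proof.
move=> p0 pN pc; elim: W => [_ | w W IHW /= /andP[wc Wc]].
  by apply: in_I_eq (@in_I0 R) => m; rewrite /Msum big_nil.
apply: in_I_Msum_perm (in_I_Msum_cat (IH pN p0 pc wc) (IHW Wc)).
by rewrite /eps_dup /= !map_cat /= perm_cons -cat1s perm_catCA.
Qed.

Lemma in_I_Msum_prefix_eps_pair b p d : p != [::] -> (size p + size b <= N)%N ->
  is_comp p -> is_comp b -> is_comp d ->
  in_I (Msum R (map (cat p) (eps_qshuffles b d))) ->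
  in_I (Msum R (eps_pair (p ++ b) d)).
Proof.
elim: b p => [|c b IHb] p p0 pbN pc bc dc; first by rewrite cats0.
case/andP: (bc) => c0 bc' Ip.
have pN : (size p < N)%N by apply: leq_trans pbN; rewrite /= addnS ltnS leq_addr.
have Ipc : in_I (Msum R (map (cat (rcons p c)) (eps_qshuffles b d))).
  apply: (in_I_Msum_catl _ (in_I_Msum_prefix_eps_dup p0 pN pc (all_comp_qshuffle bc dc))).
  apply: in_I_Msum_perm Ip; rewrite -map_cat_cons -map_cat perm_map //.
  exact: perm_eps_qshuffles_cons.
rewrite -cat_rcons; apply: IHb Ipc => //.
- by rewrite -size_eq0 size_rcons.
- by rewrite size_rcons addSnnS.
- by rewrite /is_comp all_rcons c0.
Qed.

End EpsPair.

Lemma in_I_Msum_eps_pair (R : comUnitRingType) q d :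
  q != [::] -> is_comp q -> is_comp d -> in_I (Msum R (eps_pair q d)).
Proof.
move: {2}(size q).+1 (ltnSn (size q)) => N.
elim: N q d => [|N IHN] [|b q] d //; rewrite ltnS => qN _ bqc dc.
case/andP: (bqc) => b0 qc.
have Ib : in_I (Msum R (map (cat [:: b]) (eps_qshuffles q d))).
  apply: (in_I_Msum_catl (L' := map (cons eps) (qshuffle (b :: q) d))).
    apply: in_I_Msum_perm (in_I_Msum_qshuffle_eps R bqc dc).
    exact: perm_qshuffle_cons_eps.
  apply: in_I_Msum_Ceps; rewrite all_map.
  by apply/allP => w /(allP (all_comp_qshuffle bqc dc)) /= ->.
by apply: (in_I_Msum_prefix_eps_pair IHN (b := q) (p := [:: b])); rewrite /is_comp /= ?b0.
Qed.

Lemma bar_leps0 a : leps a = 0%N -> bar a = a.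
Proof. by elim: a => // -[n|] a IHa //= /IHa ->. Qed.

Lemma leps_cat_eps b d : leps (b ++ eps :: d) = (leps (b ++ d)).+1.
Proof. by rewrite /leps !count_cat /= addnS. Qed.

Lemma bar_cat_eps b d : bar (b ++ eps :: d) = bar (b ++ d).
Proof. by rewrite /bar !filter_cat. Qed.

Theorem lemma3p11 (R : comUnitRingType)
  (hQ : forall n : nat, (n.+1)%:R \is a @GRing.unit R)
  (alpha : seq wn) (halpha : is_comp alpha) (hN : ~~ in_Ceps alpha) :
  in_I (fun m => Mq R alpha m + (-1) ^+ (leps alpha).+1 * Mq R (bar alpha) m).
Proof.
clear hQ; move: {2}(leps alpha) (erefl (leps alpha)) => n.
elim: n alpha halpha hN => [|n IHn] alpha ac aN ln.
  by apply: in_I_eq (@in_I0 R) => m; rewrite bar_leps0 // ln expr1 mulN1r subrr.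
have ea : eps \in alpha by rewrite -has_pred1 has_count -[count _ _]/(leps alpha) ln.
move: ac aN ln; case/splitPr: ea => -[|c b] d // ac aN.
rewrite leps_cat_eps bar_cat_eps => /succn_inj ln.
have [bc dc] : is_comp (c :: b) /\ is_comp d.
  by move: ac; rewrite /is_comp all_cat => /andP[-> /andP[]].
have bdc : is_comp ((c :: b) ++ d) by rewrite /is_comp all_cat; apply/andP.
apply: in_I_eq (in_IB (in_I_Msum_eps_pair R (erefl : c :: b != [::]) bc dc)
                      (IHn _ bdc aN ln)) => m.
rewrite /Msum !big_cons big_nil ln addr0 opprD addrA addrK.
by rewrite [(-1) ^+ n.+2]exprS mulN1r mulNr.
Qed.
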